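(* Let $m,n\ge 1$ and let $D$ be the $mn\times mn$ Manhattan distance matrix of a rectangular grid with $m$ rows and $n$ columns, i.e. for $s=i+n(j-1)$ and $t=k+n(l-1)$ with $i,k\in\{1,\dots,n\}$ and $j,l\in\{1,\dots,m\}$, $d_{st}=|i-k|+|j-l|$. Then $D$ is a spherical Euclidean distance matrix of embedding dimension $n+m-2$, and the points that generate $D$ lie on a hypersphere of radius $\rho=\tfrac12(n+m-2)^{1/2}$.
   Context: An $N\times N$ matrix $D=(d_{ij})$ is a Euclidean distance matrix (EDM) if there exist points $p^1,\dots,p^N$ in some Euclidean space with $d_{ij}=\|p^i-p^j\|^2$ for all $i,j$; the dimension of their affine span is the embedding dimension $r$ of $D$. An EDM is spherical if it is generated by points lying on a hypersphere. Convention: the generating points are taken in $\mathbb{R}^r$ ($r$ the embedding dimension), and the hypersphere is a hypersphere in $\mathbb{R}^r$. *)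

From mathcomp Require Import all_boot all_order all_algebra.
From mathcomp Require Import reals.
Set Implicit Arguments. Unset Strict Implicit. Unset Printing Implicit Defensive.
Import Order.TTheory GRing.Theory Num.Theory.
Local Open Scope ring_scope.

Section EDM.
Variable R : realType.

Definition sqdist (k : nat) (u v : 'rV[R]_k) : R :=
  \sum_(j < k) (u 0 j - v 0 j) ^+ 2.

Definition generates (N k : nat) (p : 'I_N -> 'rV[R]_k) (D : 'M[R]_N) : Prop :=
  forall i j, D i j = sqdist (p i) (p j).

Definition affdim (N k : nat) (p : 'I_N -> 'rV[R]_k) : nat :=
  let d i j : 'rV[R]_k := p i - p j in
  \rank (\sum_(i < N) \sum_(j < N) <<d i j>>)%MS.

Definition is_EDM (N : nat) (D : 'M[R]_N) : Prop :=
  exists k (p : 'I_N -> 'rV[R]_k), generates p D.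

Definition embdim (N : nat) (D : 'M[R]_N) (r : nat) : Prop :=
  exists k (p : 'I_N -> 'rV[R]_k), generates p D /\ affdim p = r.

Definition on_sphere (N k : nat) (p : 'I_N -> 'rV[R]_k) (rad : R) : Prop :=
  exists c : 'rV[R]_k, forall i, sqdist (p i) c = rad ^+ 2.

Definition is_spherical_EDM (N : nat) (D : 'M[R]_N) : Prop :=
  exists r (p : 'I_N -> 'rV[R]_r),
    [/\ generates p D, affdim p = r & exists rad, 0 <= rad /\ on_sphere p rad].

(* Manhattan distance matrix of the m x n grid; 0-based index
   s = i + n*j with i < n (column), j < m (row), so i = s %% n, j = s %/ n *)
Definition grid_dist (m n : nat) : 'M[R]_(m * n) :=
  \matrix_(s, t) (`|(s %% n)%:R - (t %% n)%:R| + `|(s %/ n)%:R - (t %/ n)%:R|).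

End EDM.

From mathcomp Require Import all_boot all_order all_algebra.
From mathcomp Require Import reals.
From mathcomp Require Import ring zify.
Set Implicit Arguments. Unset Strict Implicit. Unset Printing Implicit Defensive.
Import Order.TTheory GRing.Theory Num.Theory.
Local Open Scope ring_scope.

(* On the grid with m+1 rows and n+1 columns, encode the point in column
   a <= n and row b <= m by the 0/1 vector
   (1,...,1,0,...,0 with a ones | 1,...,1,0,...,0 with b ones) in R^(n+m); the
   squared Euclidean distance of two such vectors is the Manhattan distance of
   the grid points, and the differences of neighbouring points are the unit
   vectors, so the embedding dimension is n + m.  For the sphere, note that
   every grid point lies on a shortest path between the two opposite corners
   a and b, so in any generating configuration |p_s - p_a|^2 + |p_s - p_b|^2 =
   |p_a - p_b|^2 = n + m: by the median formula all points lie on the sphere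
   with diameter [p_a, p_b] (Thales). *)

Section SquaredDistance.
Variable R : realType.

Lemma sqdist_ge0 k (u v : 'rV[R]_k) : 0 <= sqdist u v.
Proof. by apply: sumr_ge0 => j _; rewrite sqr_ge0. Qed.

Lemma sqdistC k (u v : 'rV[R]_k) : sqdist u v = sqdist v u.
Proof. by apply: eq_bigr => j _; rewrite -sqrrN opprB. Qed.

Lemma sqdist_row_mx k1 k2 (u1 v1 : 'rV[R]_k1) (u2 v2 : 'rV[R]_k2) :
  sqdist (row_mx u1 u2) (row_mx v1 v2) = sqdist u1 v1 + sqdist u2 v2.
Proof.
by rewrite /sqdist big_split_ord; congr (_ + _); apply: eq_bigr => j _;
  rewrite !(row_mxEl, row_mxEr).
Qed.

Lemma sqdist_midpoint k (x y z : 'rV[R]_k) :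
  sqdist x (2^-1 *: (y + z)) =
  2^-1 * sqdist x y + 2^-1 * sqdist x z - 4^-1 * sqdist y z.
Proof.
rewrite /sqdist !mulr_sumr -big_split -sumrB /=; apply: eq_bigr => j _.
by rewrite !mxE; field.
Qed.

Lemma on_sphere_diameter N k (p : 'I_N -> 'rV[R]_k) a b :
  (forall i, sqdist (p i) (p a) + sqdist (p i) (p b) = sqdist (p a) (p b)) ->
  on_sphere p (2^-1 * Num.sqrt (sqdist (p a) (p b))).
Proof.
move=> thales; exists (2^-1 *: (p a + p b)) => i.
rewrite sqdist_midpoint -mulrDr thales exprMn sqr_sqrtr ?sqdist_ge0 //.
by field.
Qed.

Lemma affdim_full N k (p : 'I_N -> 'rV[R]_k) :
  (forall c : 'I_k, exists i j, p i - p j = delta_mx 0 c) -> affdim p = k.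
Proof.
move=> spans; apply/eqP; rewrite eqn_leq rank_leq_col -{1}(mxrank1 R k).
apply: mxrankS; apply/row_subP => c; rewrite row1.
have [i [j <-]] := spans c.
by apply: (sumsmx_sup i) => //; apply: (sumsmx_sup j) => //; rewrite genmxE.
Qed.

Definition unary N a : 'rV[R]_N := \row_(c < N) (c < a)%N%:R.

Lemma sqdist_unary N a b : (a <= N)%N -> (b <= N)%N ->
  sqdist (unary N a) (unary N b) = `|a%:R - b%:R|.
Proof.
wlog ab : a b / (a <= b)%N.
  move=> sym aN bN; have [ab|/ltnW ba] := leqP a b; first exact: sym.
  by rewrite sqdistC distrC sym.
move=> _ bN; rewrite distrC ger0_norm ?subr_ge0 ?ler_nat // -natrB //.
rewrite /sqdist; under eq_bigr do rewrite !mxE.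
rewrite -(big_mkord xpredT (fun c => ((c < a)%N%:R - (c < b)%N%:R) ^+ 2)).
rewrite (@big_cat_nat _ _ _ a 0 N) ?(leq_trans ab) //.
rewrite (@big_cat_nat _ _ _ b a N) //= !big_nat.
rewrite [X in X + _]big1 => [|c /andP[_ ca]]; last first.
  by rewrite ca (leq_trans ca ab) subrr expr0n.
rewrite [X in _ + (_ + X)]big1 => [|c /andP[bc _]]; last first.
  by rewrite !ltnNge bc (leq_trans ab bc) subrr expr0n.
rewrite add0r addr0 -big_nat (eq_big_nat _ _ (F2 := fun _ => 1)).
  by rewrite sumr_const_nat.
by move=> c /andP[ac cb]; rewrite cb ltnNge ac sub0r sqrrN expr1n.
Qed.

Lemma unary_succB N (c : 'I_N) : unary N c.+1 - unary N c = delta_mx 0 c.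
Proof.
apply/rowP => j; rewrite !mxE eqxx -val_eqE ltnS /=.
by case: ltngtP; rewrite ?subrr ?subr0.
Qed.

Lemma natr_dist_ends (c N : nat) : (c <= N)%N ->
  `|c%:R - 0| + `|c%:R - N%:R| = N%:R :> R.
Proof.
by move=> cN; rewrite subr0 normr_nat distrC ger0_norm ?subr_ge0 ?ler_nat //
  addrC subrK.
Qed.

End SquaredDistance.

Section Grid.
Variables (R : realType) (m n : nat).

Lemma grid_col_le (s : 'I_(m.+1 * n.+1)) : (s %% n.+1 <= n)%N.
Proof. by rewrite -ltnS ltn_pmod. Qed.

Lemma grid_row_le (s : 'I_(m.+1 * n.+1)) : (s %/ n.+1 <= m)%N.
Proof. by rewrite -ltnS ltn_divLR. Qed.

Lemma grid_index a b : (a <= n)%N -> (b <= m)%N ->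
  exists s : 'I_(m.+1 * n.+1), (s %% n.+1 = a)%N /\ (s %/ n.+1 = b)%N.
Proof.
move=> an bm; have s_lt : (b * n.+1 + a < m.+1 * n.+1)%N by nia.
exists (Ordinal s_lt); rewrite /= modnMDl divnMDl // modn_small ?divn_small //.
by rewrite addn0.
Qed.

Lemma grid_dist_corners : exists a b,
  grid_dist R m.+1 n.+1 a b = (n + m)%:R /\
  forall s, grid_dist R m.+1 n.+1 s a + grid_dist R m.+1 n.+1 s b =
            grid_dist R m.+1 n.+1 a b.
Proof.
have [a [a1 a2]] := grid_index (leq0n n) (leq0n m).
have [b [b1 b2]] := grid_index (leqnn n) (leqnn m).
exists a, b; rewrite !mxE a1 a2 b1 b2 !sub0r !normrN !normr_nat -natrD.
split=> // s; rewrite !mxE a1 a2 b1 b2 addrACA natrD.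
by rewrite !natr_dist_ends ?grid_col_le ?grid_row_le.
Qed.

Lemma grid_sphere k (p : 'I_(m.+1 * n.+1) -> 'rV[R]_k) :
  generates p (grid_dist R m.+1 n.+1) ->
  on_sphere p (2^-1 * Num.sqrt (n + m)%:R).
Proof.
move=> gen; have [a [b [Dab between]]] := grid_dist_corners.
by rewrite -Dab gen; apply: on_sphere_diameter => s; rewrite -!gen.
Qed.

Definition gridpt (s : 'I_(m.+1 * n.+1)) : 'rV[R]_(n + m) :=
  row_mx (unary R n (s %% n.+1)%N) (unary R m (s %/ n.+1)%N).

Lemma generates_gridpt : generates gridpt (grid_dist R m.+1 n.+1).
Proof.
move=> s t; rewrite /gridpt sqdist_row_mx mxE.
by rewrite !sqdist_unary ?grid_col_le ?grid_row_le.
Qed.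

Lemma affdim_gridpt : affdim gridpt = (n + m)%N.
Proof.
apply: affdim_full => c; rewrite -(splitK c); case: (split c) => [a|b] /=.
- have [s [s1 s2]] := grid_index (ltn_ord a) (leq0n m).
  have [t [t1 t2]] := grid_index (ltnW (ltn_ord a)) (leq0n m).
  exists s, t; rewrite /gridpt s1 s2 t1 t2 opp_row_mx add_row_mx.
  by rewrite unary_succB subrr delta_mx_lshift.
- have [s [s1 s2]] := grid_index (leq0n n) (ltn_ord b).
  have [t [t1 t2]] := grid_index (leq0n n) (ltnW (ltn_ord b)).
  exists s, t; rewrite /gridpt s1 s2 t1 t2 opp_row_mx add_row_mx.
  by rewrite unary_succB subrr delta_mx_rshift.
Qed.

End Grid.

Theorem corollary1 (R : realType) (m n : nat) :
  (0 < m)%N -> (0 < n)%N ->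
  [/\ is_EDM (grid_dist R m n),
      is_spherical_EDM (grid_dist R m n),
      embdim (grid_dist R m n) (n + m - 2) &
      forall p : 'I_(m * n) -> 'rV[R]_(n + m - 2),
        generates p (grid_dist R m n) ->
        on_sphere p (2^-1 * Num.sqrt ((n + m - 2)%:R))].
Proof.
case: m => [|m] //; case: n => [|n] // _ _.
have -> : (n.+1 + m.+1 - 2 = n + m)%N by lia.
have gen := @generates_gridpt R m n; have dim := @affdim_gridpt R m n.
split.
- by exists (n + m)%N, (@gridpt R m n).
- exists (n + m)%N, (@gridpt R m n); split=> //.
  exists (2^-1 * Num.sqrt (n + m)%:R); split; last exact: grid_sphere.
  by rewrite mulr_ge0 ?sqrtr_ge0 ?invr_ge0.
- by exists (n + m)%N, (@gridpt R m n).
- by move=> p; apply: grid_sphere.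
Qed.
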